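(* Consider the altruistic planner's one-step (myopic) problem described in the context: for each public belief $b\in[0,1]$, maximize $r_A(b,q)=-\beta(q)-C\min(b,1-b,1-q)$ over $q\in[0.5,1]$. Define $$t_M=\begin{cases}\frac{\beta(1)}{C}, & \beta(1)<C(1-p),\\ 0.5, & \text{otherwise.}\end{cases}$$ Then the optimal myopic altruistic policy $\pi^0_A$ (a function with $\pi^0_A(b)\in\arg\sup_{q\in[0.5,1]} r_A(b,q)$ for every $b\in[0,1]$) is given by $$\pi^0_A(b)=\begin{cases}1, & b\in(t_M,1-t_M),\\ p, & \text{otherwise.}\end{cases}$$
   Context: Sequential social learning model: a binary state $\omega\in\{G,B\}$ is drawn once with $\mathbb{P}(\omega=G)=b_1$. Agents $i=1,2,\dots$ act in sequence. Before agent $i$ acts, a planner chooses a signal precision $q_i\in[0.5,1]$; agent $i$ receives a private binary signal $s_i\in\{G,B\}$ with $\mathbb{P}(s_i=\omega)=q_i$, signals being conditionally independent given $\omega$. Given the public belief $b_i$ (probability of $G$ given past precisions and actions), agent $i$ chooses $a_i=s_i$ if $1-q_i\le b_i\le q_i$, $a_i=G$ if $b_i>q_i$, and $a_i=B$ if $b_i<1-q_i$. An agent whose action differs from $\omega$ incurs cost $C>0$; the probability of this is $\min(b_i,1-b_i,1-q_i)$. The altruistic planner has a baseline precision $p\in[0.5,1)$ and a precision-cost function $\beta:[0.5,1]\to[0,\infty)$ that is non-negative, increasing, continuous and concave with $\beta(p)=0$. Its instantaneous reward for choosing precision $q$ at public belief $b$ is $r_A(b,q)=-\beta(q)-C\min(b,1-b,1-q)$.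 *)

From Stdlib Require Import Reals Lra.
Open Scope R_scope.

Definition nonneg_on (beta : R -> R) : Prop :=
  forall q, 1/2 <= q <= 1 -> 0 <= beta q.

Definition increasing_on (beta : R -> R) : Prop :=
  forall x y, 1/2 <= x <= 1 -> 1/2 <= y <= 1 -> x <= y -> beta x <= beta y.

Definition continuous_on (beta : R -> R) : Prop :=
  forall x, 1/2 <= x <= 1 -> forall eps, 0 < eps -> exists delta, 0 < delta /\
    forall y, 1/2 <= y <= 1 -> Rabs (y - x) < delta -> Rabs (beta y - beta x) < eps.

Definition concave_on (beta : R -> R) : Prop :=
  forall x y t, 1/2 <= x <= 1 -> 1/2 <= y <= 1 -> 0 <= t <= 1 ->
    t * beta x + (1 - t) * beta y <= beta (t * x + (1 - t) * y).

Definition rA (beta : R -> R) (C b q : R) : R :=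
  - beta q - C * Rmin b (Rmin (1 - b) (1 - q)).

Definition is_argmax_half_one (f : R -> R) (q : R) : Prop :=
  1/2 <= q <= 1 /\ forall q', 1/2 <= q' <= 1 -> f q' <= f q.

Definition tM (beta : R -> R) (C p : R) : R :=
  if Rlt_dec (beta 1) (C * (1 - p)) then beta 1 / C else 1/2.

Definition piA0 (beta : R -> R) (C p b : R) : R :=
  if Rlt_dec (tM beta C p) b then
    (if Rlt_dec b (1 - tM beta C p) then 1 else p)
  else p.

(* Only the two candidates [p] and [1] matter.  Below [p] the precision is
   free and the error probability [min(b, 1-b, 1-q)] only grows as [q]
   decreases, so [q = p] dominates.  On [[p, 1]] concavity bounds [beta] from
   below by its chord through [(p, 0)] and [(1, beta 1)], while the error
   term is concave in [q]; hence [r_A(b, q)] lies below the chord between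
   [r_A(b, p)] and [r_A(b, 1) = - beta 1].  The policy [pi^0_A] picks the
   better of the two, and [t_M] is exactly the belief at which they tie. *)
From Stdlib Require Import Reals Lra Psatz.
Open Scope R_scope.

Lemma concave_on_chord_le (f : R -> R) (x q y : R) :
  concave_on f -> 1/2 <= x -> x <= q <= y -> y <= 1 ->
  (y - q) * f x + (q - x) * f y <= (y - x) * f q.
Proof.
  intros hconc hx hq hy.
  destruct (Req_dec x y) as [-> | hxy].
  { replace q with y by lra. lra. }
  set (t := (y - q) / (y - x)).
  assert (htxy : t * (y - x) = y - q) by (unfold t; field; lra).
  assert (ht : 0 <= t <= 1) by (split; nra).
  assert (hchord := hconc x y t ltac:(lra) ltac:(lra) ht).
  replace (t * x + (1 - t) * y) with q in hchord by (unfold t; field; lra).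
  replace (q - x) with ((1 - t) * (y - x)) by lra.
  rewrite <- htxy.
  nra.
Qed.

Lemma error_prob_chord_le (b p q : R) : 0 <= b <= 1 -> p <= q <= 1 ->
  (1 - q) * Rmin b (Rmin (1 - b) (1 - p)) <= (1 - p) * Rmin b (Rmin (1 - b) (1 - q)).
Proof.
  intros hb hq.
  unfold Rmin; repeat destruct Rle_dec; nra.
Qed.

Section MyopicAltruisticPlanner.

Variables (beta : R -> R) (C p : R).
Hypotheses (hp : 1/2 <= p < 1) (hC : 0 < C)
  (hnn : nonneg_on beta) (hinc : increasing_on beta)
  (hconc : concave_on beta) (hbp : beta p = 0).

Lemma beta_eq0_below (q : R) : 1/2 <= q <= p -> beta q = 0.
Proof.
  intros hq.
  assert (h0 := hnn q ltac:(lra)).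
  assert (hle := hinc q p ltac:(lra) ltac:(lra) ltac:(lra)).
  lra.
Qed.

Lemma rA_one (b : R) : 0 <= b <= 1 -> rA beta C b 1 = - beta 1.
Proof.
  intros hb. unfold rA.
  replace (Rmin b (Rmin (1 - b) (1 - 1))) with 0
    by (unfold Rmin; repeat destruct Rle_dec; lra).
  ring.
Qed.

Lemma rA_le_rA_p (b q : R) : 0 <= b <= 1 -> 1/2 <= q <= p ->
  rA beta C b q <= rA beta C b p.
Proof.
  intros hb hq. unfold rA. rewrite (beta_eq0_below q hq), hbp.
  unfold Rmin; repeat destruct Rle_dec; nra.
Qed.

Lemma rA_le_chord (b q : R) : 0 <= b <= 1 -> p <= q <= 1 ->
  (1 - p) * rA beta C b q <= (q - p) * rA beta C b 1 + (1 - q) * rA beta C b p.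
Proof.
  intros hb hq.
  assert (hbeta := concave_on_chord_le beta p q 1 hconc ltac:(lra) hq ltac:(lra)).
  assert (herr := error_prob_chord_le b p q hb hq).
  rewrite hbp in hbeta.
  rewrite (rA_one b hb). unfold rA. rewrite hbp.
  nra.
Qed.

Lemma rA_le_max_candidates (b q : R) : 0 <= b <= 1 -> 1/2 <= q <= 1 ->
  rA beta C b q <= Rmax (rA beta C b p) (rA beta C b 1).
Proof.
  intros hb hq.
  assert (hmax_p := Rmax_l (rA beta C b p) (rA beta C b 1)).
  assert (hmax_1 := Rmax_r (rA beta C b p) (rA beta C b 1)).
  destruct (Rle_dec q p) as [hqp | hqp].
  - assert (h := rA_le_rA_p b q hb ltac:(lra)). lra.
  - assert (h := rA_le_chord b q hb ltac:(lra)). nra.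
Qed.

Lemma cost_le_inside_thresholds (b : R) :
  tM beta C p < b < 1 - tM beta C p ->
  beta 1 <= C * Rmin b (Rmin (1 - b) (1 - p)).
Proof.
  unfold tM. destruct Rlt_dec as [hcheap | _]; intros hb; [| lra].
  assert (hdiv : C * (beta 1 / C) = beta 1) by (field; lra).
  unfold Rmin; repeat destruct Rle_dec; nra.
Qed.

Lemma cost_ge_outside_thresholds (b : R) : 0 <= b <= 1 ->
  ~ (tM beta C p < b < 1 - tM beta C p) ->
  C * Rmin b (Rmin (1 - b) (1 - p)) <= beta 1.
Proof.
  intros hb. unfold tM. destruct Rlt_dec as [hcheap | hcostly]; intros hout.
  - assert (hdiv : C * (beta 1 / C) = beta 1) by (field; lra).
    unfold Rmin; repeat destruct Rle_dec; nra.
  - apply Rnot_lt_le in hcostly.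
    unfold Rmin; repeat destruct Rle_dec; nra.
Qed.

Lemma piA0_attains_max (b : R) : 0 <= b <= 1 ->
  Rmax (rA beta C b p) (rA beta C b 1) <= rA beta C b (piA0 beta C p b).
Proof.
  intros hb.
  assert (hrp : rA beta C b p = - C * Rmin b (Rmin (1 - b) (1 - p)))
    by (unfold rA; rewrite hbp; ring).
  unfold piA0; destruct Rlt_dec as [hlo | hlo]; [destruct Rlt_dec as [hhi | hhi] |];
    rewrite ?(rA_one b hb), ?hrp; apply Rmax_lub; try lra.
  - assert (h := cost_le_inside_thresholds b (conj hlo hhi)). lra.
  - assert (h := cost_ge_outside_thresholds b hb ltac:(intros []; auto)). lra.
  - assert (h := cost_ge_outside_thresholds b hb ltac:(intros []; auto)). lra.
Qed.

End MyopicAltruisticPlanner.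

Theorem theorem1 (beta : R -> R) (C p : R)
  (hp : 1/2 <= p < 1) (hC : 0 < C)
  (hnn : nonneg_on beta) (hinc : increasing_on beta)
  (hcont : continuous_on beta) (hconc : concave_on beta)
  (hbp : beta p = 0) :
  forall b, 0 <= b <= 1 -> is_argmax_half_one (rA beta C b) (piA0 beta C p b).
Proof.
  intros b hb. split.
  - unfold piA0; repeat destruct Rlt_dec; lra.
  - intros q hq.
    eapply Rle_trans.
    + exact (rA_le_max_candidates beta C p hp hC hnn hinc hconc hbp b q hb hq).
    + exact (piA0_attains_max beta C p hp hC hbp b hb).
Qed.
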